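(* Let $\mathcal{D}$ be the arena of a $p$-periodic graph on $V$, and let $\mathcal{A}^*$ be its maximum augmented arena. Then $\mathcal{D}$ is copwin if and only if $\mathcal{A}^*$ contains an anchored star, i.e., there exist $t\in\mathbb{Z}_p$ and $u\in V$ such that $\Gamma_t(u,\mathcal{A}^* )=V$ and $(t,u)$ is anchored.
   Context: Let $V$ be a finite set and $p\ge 1$ an integer; $[t]_p$ denotes $t \bmod p$. A $p$-periodic graph $\mathcal{G}=(G_0,\dots,G_{p-1})^*$ is the infinite sequence of directed graphs $G_t=(V,E_{[t]_p})$, $t=0,1,2,\dots$, where $E_0,\dots,E_{p-1}\subseteq V\times V$ (self-loops allowed), each $G_i$ sinkless. An arena on $V$ of length $p$ is a directed graph with vertex set $\mathbb{Z}_p\times V$ (temporal nodes) all of whose edges have the form $((i,w),([i+1]_p,w'))$. The arena of $\mathcal{G}$ is the arena $\mathcal{D}$ with $((i,u),([i+1]_p,v))\in E(\mathcal{D})$ iff $(u,v)\in E_i$. Write $\Gamma_t(u,\mathcal{M})=\{v : ((t,u),([t+1]_p,v))\in E(\mathcal{M})\}$. Game: first the cop, then the robber choose vertices. In each round $t$, with cop at $c$ and robber at $r$, the cop must move to some $c'\in\Gamma_{[t]_p}(c,\mathcal{D})$; if $c'=r$ the cop wins; otherwise the robber must move to some $r'\in\Gamma_{[t]_p}(r,\mathcal{D})$ and the next round starts. A configuration $(t,c,r)$ ($t\in\mathbb{Z}_p$) is the state at the start of a round with index $\equiv t\pmod p$, cop at $c$, robber at $r$, cop to move; it is copwin if from it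 the cop can force capture in finitely many rounds against every robber strategy. $\mathcal{D}$ is copwin if there is $c\in V$ with $(0,c,r)$ copwin for all $r\in V$. An augmented arena of $\mathcal{D}$ is an arena $\mathcal{A}$ with $E(\mathcal{D})\subseteq E(\mathcal{A})$ such that for every edge $((t,x),([t+1]_p,y))\in E(\mathcal{A})$ the configuration $(t,x,y)$ is copwin. $\mathcal{A}^*$ denotes the maximum augmented arena, whose edge set is the union of the edge sets of all augmented arenas of $\mathcal{D}$. A temporal node $(t,u)$ is a star in an arena $\mathcal{A}$ if $\Gamma_t(u,\mathcal{A})=V$; it is anchored if there is a directed walk (possibly of length $0$) in $\mathcal{D}$ from some temporal node $(0,v)$ to $(t,u)$. *)

From mathcomp Require Import all_boot.
Set Implicit Arguments. Unset Strict Implicit. Unset Printing Implicit Defensive.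

(* Time indices Z_p are represented by 'I_p (with 0 < p); [t+1]_p is ordS t.
   An arena of length p on V (edges only of the form ((i,w),([i+1]_p,w')))
   is represented by its edge relation A : 'I_p -> V -> V -> Prop, where
   A i w w' means ((i,w),([i+1]_p,w')) is an edge. *)

Definition arena (V : Type) (p : nat) := 'I_p -> V -> V -> Prop.

Definition arena_of (V : finType) (p : nat) (E : 'I_p -> rel V) : arena V p :=
  fun i u v => E i u v.

Definition sinkless_periodic (V : finType) (p : nat) (E : 'I_p -> rel V) :=
  forall (i : 'I_p) (u : V), exists v, E i u v.

(* copwin configurations (t, c, r): the cop, to move, can force capture in
   finitely many rounds (inductive attractor / well-founded strategy tree). *)
Inductive copwin_conf (V : finType) (p : nat) (E : 'I_p -> rel V)
  : 'I_p -> V -> V -> Prop :=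
| copwin_step (t : 'I_p) (c r : V) (c' : V) :
    E t c c' ->
    (c' = r \/ (forall r' : V, E t r r' -> copwin_conf E (ordS t) c' r')) ->
    copwin_conf E t c r.

Definition copwin_arena (V : finType) (p : nat) (hp : 0 < p)
  (E : 'I_p -> rel V) : Prop :=
  exists c : V, forall r : V, copwin_conf E (Ordinal hp) c r.

Definition augmented (V : finType) (p : nat) (E : 'I_p -> rel V)
  (A : arena V p) : Prop :=
  (forall t x y, arena_of E t x y -> A t x y) /\
  (forall t x y, A t x y -> copwin_conf E t x y).

Definition max_augmented (V : finType) (p : nat) (E : 'I_p -> rel V)
  : arena V p :=
  fun t x y => exists A : arena V p, augmented E A /\ A t x y.

Definition is_star (V : finType) (p : nat) (A : arena V p) (t : 'I_p) (u : V) :=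
  forall v : V, A t u v.

Inductive anchored (V : finType) (p : nat) (hp : 0 < p) (E : 'I_p -> rel V)
  : 'I_p -> V -> Prop :=
| anchored0 (v : V) : anchored hp E (Ordinal hp) v
| anchoredS (t : 'I_p) (u u' : V) :
    anchored hp E t u -> arena_of E t u u' -> anchored hp E (ordS t) u'.

From mathcomp Require Import all_boot.
Set Implicit Arguments. Unset Strict Implicit. Unset Printing Implicit Defensive.

(* Every edge (t, x, y) of D is a copwin configuration (the cop steps onto the
   robber), so the copwin configurations themselves form an augmented arena,
   which is therefore the maximum one.  A star of A* at (t, u) thus says that a
   cop at u at time t wins against every robber position.  Such a winning node
   propagates backwards along edges of D: a cop one step earlier moves onto it
   and wins wherever the robber goes.  Following the anchoring walk back to
   time 0 yields a winning start vertex; conversely a winning start vertex is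
   a star anchored by the empty walk. *)

Definition copwin_from (V : finType) (p : nat) (E : 'I_p -> rel V)
    (t : 'I_p) (c : V) : Prop :=
  forall r : V, copwin_conf E t c r.

Lemma copwin_conf_edge (V : finType) (p : nat) (E : 'I_p -> rel V) t x y :
  E t x y -> copwin_conf E t x y.
Proof. by move=> Exy; apply: (copwin_step Exy); left. Qed.

Lemma augmented_copwin_conf (V : finType) (p : nat) (E : 'I_p -> rel V) :
  augmented E (fun t x y => copwin_conf E t x y).
Proof. by split=> // t x y; apply: copwin_conf_edge. Qed.

Lemma max_augmentedE (V : finType) (p : nat) (E : 'I_p -> rel V) t x y :
  max_augmented E t x y <-> copwin_conf E t x y.
Proof.
split; first by case=> A [[_ copwinA] /copwinA].
by move=> win; exists (fun t x y => copwin_conf E t x y); split;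
  first exact: augmented_copwin_conf.
Qed.

Lemma is_star_max_augmentedE (V : finType) (p : nat) (E : 'I_p -> rel V) t u :
  is_star (max_augmented E) t u <-> copwin_from E t u.
Proof. by split=> star r; apply/max_augmentedE; apply: star. Qed.

Lemma copwin_from_pred (V : finType) (p : nat) (E : 'I_p -> rel V) t w w' :
  E t w w' -> copwin_from E (ordS t) w' -> copwin_from E t w.
Proof. by move=> Eww' win r; apply: (copwin_step Eww'); right. Qed.

Lemma anchored_copwin_from (V : finType) (p : nat) (hp : 0 < p)
    (E : 'I_p -> rel V) t u :
  anchored hp E t u -> copwin_from E t u ->
  exists c : V, copwin_from E (Ordinal hp) c.
Proof.
elim=> [v win | t' w w' _ IH Eww' win]; first by exists v.
exact/IH/(copwin_from_pred Eww').
Qed.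

Theorem theorem1 (V : finType) (p : nat) (hp : 0 < p) (E : 'I_p -> rel V)
  (Hsink : sinkless_periodic E) :
  copwin_arena hp E <->
  exists (t : 'I_p) (u : V),
    is_star (max_augmented E) t u /\ anchored hp E t u.
Proof.
split.
  case=> c win; exists (Ordinal hp), c.
  by split; [exact/is_star_max_augmentedE | exact: anchored0].
case=> t [u [/is_star_max_augmentedE win anch]].
exact: anchored_copwin_from anch win.
Qed.
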